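(* Assume the setting described in the context (hypotheses on $f,v,\eta$, the mesh condition $h<1/C$ and the CFL condition). If $\rho^o_j\ge 0$ for all $j\in\mathbb{Z}$, then the approximate solution constructed by the scheme satisfies $\|\rho^n\|_{L^1}\le\|\rho^o\|_{L^1}$ for all $n\in\mathbb{N}$.
   Context: Let $C>0$ and let $f\in C^2(\mathbb{R}^+\times\mathbb{R}\times\mathbb{R};\mathbb{R})$ satisfy $\sup_{t,x,\rho}|\partial_\rho f(t,x,\rho)|<+\infty$, $\sup_{t,x}|\partial_x f(t,x,\rho)|< C|\rho|$ and $\sup_{t,x}|\partial^2_{xx} f(t,x,\rho)|< C|\rho|$ for all $\rho$, and $f(t,x,0)=0$ for all $t,x$. Let $v\in (C^2\cap W^{1,\infty})(\mathbb{R};\mathbb{R})$ and $\eta\in (C^2\cap W^{2,\infty})(\mathbb{R};\mathbb{R})$. These are the data of the nonlocal conservation law $\partial_t\rho+\partial_x\big(f(t,x,\rho)\,v(\rho*\eta)\big)=0$, $\rho(0,x)=\rho^o(x)$, with $\rho^o\in L^\infty(\mathbb{R})$. Numerical scheme: fix a space step $h>0$ and time step $\tau>0$, set $\lambda=\tau/h$, $x_j=jh$, $x_{j+1/2}=(j+\tfrac12)h$, $t^n=n\tau$. Assume $h<1/C$ and the CFL condition $\lambda\,(1+2\|\partial_\rho f\|_{L^\infty})\|v\|_{L^\infty}\le 1/6$. Set $\rho^o_j=\frac1h\int_{x_{j-1/2}}^{x_{j+1/2}}\rho^o(x)\,dx$ and $\rho^{n+1}_j=\rho^n_j-\lambda\big(\mathbf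 f^n_{j+1/2}(\rho^n_j,\rho^n_{j+1})-\mathbf f^n_{j-1/2}(\rho^n_{j-1},\rho^n_j)\big)$, where $\mathbf f^n_{j+1/2}(\rho_1,\rho_2)=\frac{f(t^n,x_{j+1/2},\rho_1)+f(t^n,x_{j+1/2},\rho_2)}{2}\,v(c^n_{j+1/2})-\frac{1}{6\lambda}(\rho_2-\rho_1)$, $c^n_{j+1/2}=\sum_{k\in\mathbb{Z}} h\,\rho^n_{k+1/2}\,\eta_{j+1/2-k}$, with $\rho^n_{k+1/2}$ a convex combination of $\rho^n_k$ and $\rho^n_{k+1}$, and $\eta_{m+1/2}=\frac1h\int_{x_m}^{x_{m+1}}\eta(x)\,dx$. Discrete norms: $\|\rho^n\|_{L^1}=\sum_{j\in\mathbb{Z}}h|\rho^n_j|$ (and $\|\rho^o\|_{L^1}$ is the $L^1$ norm of the initial datum). *)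

From HB Require Import structures.
From mathcomp Require Import all_boot all_order all_algebra.
From mathcomp Require Import all_classical all_reals all_analysis.
Set Implicit Arguments. Unset Strict Implicit. Unset Printing Implicit Defensive.
Import Order.TTheory GRing.Theory Num.Theory.
Import numFieldNormedType.Exports.
Local Open Scope classical_set_scope.
Local Open Scope ring_scope.

Section Defs.
Variable R : realType.

Definition unc3 (g : R -> R -> R -> R) : R * R * R -> R :=
  fun p => g p.1.1 p.1.2 p.2.

Definition pd_t (g : R -> R -> R -> R) : R -> R -> R -> R :=
  fun t x r => derive1 (fun s => g s x r) t.
Definition pd_x (g : R -> R -> R -> R) : R -> R -> R -> R :=
  fun t x r => derive1 (fun s => g t s r) x.
Definition pd_rho (g : R -> R -> R -> R) : R -> R -> R -> R :=
  fun t x r => derive1 (fun s => g t x s) r.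

Definition C1_R3 (g : R -> R -> R -> R) : Prop :=
  (forall t x r, derivable (fun s => g s x r) t 1 /\
                 derivable (fun s => g t s r) x 1 /\
                 derivable (fun s => g t x s) r 1) /\
  continuous (unc3 g) /\ continuous (unc3 (pd_t g)) /\
  continuous (unc3 (pd_x g)) /\ continuous (unc3 (pd_rho g)).

Definition C2_R3 (g : R -> R -> R -> R) : Prop :=
  C1_R3 g /\ C1_R3 (pd_t g) /\ C1_R3 (pd_x g) /\ C1_R3 (pd_rho g).

(* f in C^2(R^+ x R x R), R^+ = [0,+oo): f is the restriction to the closed
   half-space {t >= 0} of a C^2 function on R^3 *)
Definition C2_halfspace (f : R -> R -> R -> R) : Prop :=
  exists g, C2_R3 g /\ forall t x r, 0 <= t -> g t x r = f t x r.

Definition C2_R1 (u : R -> R) : Prop :=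
  (forall x, derivable u x 1) /\ (forall x, derivable (derive1 u) x 1) /\
  continuous (derive1 (derive1 u)).

(* W^{1,oo} (for a C^1 function: u and u' bounded) *)
Definition W1inf (u : R -> R) : Prop :=
  exists M, forall x, `|u x| <= M /\ `|derive1 u x| <= M.

(* W^{2,oo} (for a C^2 function: u, u', u'' bounded) *)
Definition W2inf (u : R -> R) : Prop :=
  exists M, forall x, `|u x| <= M /\ `|derive1 u x| <= M /\
                      `|derive1 (derive1 u) x| <= M.

Definition Linf (u : R -> R) : Prop :=
  measurable_fun setT u /\
  exists M : R, (lebesgue_measure [set x | M < `|u x|]%R) = 0%E.

(* sup norms (for continuous functions the L^oo norm is the sup) *)
Definition supnorm (u : R -> R) : R := sup [set `|u x| | x in setT].
Definition supnorm_drho (f : R -> R -> R -> R) : R :=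
  sup [set y | exists t x r, 0 <= t /\ y = `|pd_rho f t x r|].

(* h : space step, tau : time step, lambda = tau / h *)
Definition xhalf (h : R) (j : int) : R := (j%:~R + 2^-1) * h.

(* eta_{m+1/2} = 1/h int_{x_m}^{x_{m+1}} eta *)
Definition eta_half (eta : R -> R) (h : R) (m : int) : R :=
  h^-1 * Rintegral lebesgue_measure `[m%:~R * h, (m + 1)%:~R * h] eta.

Definition rho_init (rho0 : R -> R) (h : R) (j : int) : R :=
  h^-1 * Rintegral lebesgue_measure `[xhalf h (j - 1), xhalf h j] rho0.

Definition rho_half (theta : int -> R) (rho : int -> R) (k : int) : R :=
  theta k * rho k + (1 - theta k) * rho (k + 1).

(* c^n_{j+1/2} = sum_{k in Z} h rho^n_{k+1/2} eta_{j+1/2-k}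
   (as the limit of the symmetric partial sums) *)
Definition conv_c (eta : R -> R) (h : R) (theta : int -> R) (rho : int -> R)
  (j : int) : R :=
  limn (fun N : nat => \sum_(i < (N + N).+1)
          h * rho_half theta rho (i%:Z - N%:Z) *
          eta_half eta h (j - (i%:Z - N%:Z))).

Definition num_flux (f : R -> R -> R -> R) (v : R -> R) (lambda tn xjh cj : R)
  (r1 r2 : R) : R :=
  (f tn xjh r1 + f tn xjh r2) / 2 * v cj - (6 * lambda)^-1 * (r2 - r1).

Definition scheme_step (f : R -> R -> R -> R) (v eta : R -> R) (h tau : R)
  (theta : int -> R) (n : nat) (rho : int -> R) : int -> R :=
  let lambda := tau / h in
  let tn := n%:R * tau in
  let F j := num_flux f v lambda tn (xhalf h j) (conv_c eta h theta rho j)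
                      (rho j) (rho (j + 1)) in
  fun j => rho j - lambda * (F j - F (j - 1)).

Fixpoint scheme (f : R -> R -> R -> R) (v eta rho0 : R -> R) (h tau : R)
  (theta : nat -> int -> R) (n : nat) : int -> R :=
  match n with
  | 0 => rho_init rho0 h
  | n'.+1 => scheme_step f v eta h tau (theta n') n'
               (scheme f v eta rho0 h tau theta n')
  end.

Definition l1_disc (h : R) (rho : int -> R) : \bar R :=
  (\esum_(j in [set: int]) (h * `|rho j|)%:E)%E.

Definition L1_norm (u : R -> R) : \bar R :=
  (\int[lebesgue_measure]_x (`|u x|)%:E)%E.

End Defs.

From HB Require Import structures.
From mathcomp Require Import all_boot all_order all_algebra.
From mathcomp Require Import all_classical all_reals all_analysis.
From mathcomp Require Import measurable_realfun ring lra zify.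
Set Implicit Arguments. Unset Strict Implicit. Unset Printing Implicit Defensive.
Import Order.TTheory GRing.Theory Num.Theory.
Import numFieldNormedType.Exports.
Local Open Scope classical_set_scope.
Local Open Scope ring_scope.

(* Under the CFL condition the update preserves nonnegativity: the new value
   is [(rho_(j-1) + 4 rho_j + rho_(j+1)) / 6] corrected by transport terms, each
   at most a twelfth of the density it carries.  For nonnegative data the
   discrete L^1 norm is the total mass, and the flux differences telescope: on
   the window [-M, M] the new mass exceeds the old one by at most a multiple of
   the four densities at the window's edges.  Since the old densities are
   summable, averaging these window bounds over many M makes the edge terms
   negligible, so no mass is created.  Initially, the cell averages have total
   mass at most the integral of |rho^o|. *)

Lemma ler_dist_derive1 (R : realType) (F : R -> R) (L a b : R) :
  (forall s, derivable F s 1) -> (forall s, `|derive1 F s| <= L) ->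
  `|F b - F a| <= L * `|b - a|.
Proof.
move=> dF dFL; wlog ab : a b / a <= b.
  move=> hwlog; case: (leP a b) => [/hwlog //|/ltW ba].
  by rewrite -normrN opprB -(normrN (b - a)) opprB hwlog.
have dF' (s : R) : is_derive s 1 F (derive1 F s) by rewrite derive1E; exact: derivableP.
have cF : {within `[a, b], continuous F}.
  by apply: derivable_within_continuous => s _.
have [c _ ->] := MVT_segment ab (fun s _ => dF' s) cF.
by rewrite normrM ler_wpM2r.
Qed.

Lemma le_supnorm_drho (R : realType) (f : R -> R -> R -> R) :
  (exists M, forall t x r, 0 <= t -> `|pd_rho f t x r| <= M) ->
  forall t x r, 0 <= t -> `|pd_rho f t x r| <= supnorm_drho f.
Proof.
move=> [M hM] t x r t0; apply: ub_le_sup; last by exists t, x, r.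
by exists M => _ [t' [x' [r' [t0' ->]]]]; exact: hM.
Qed.

Lemma le_supnorm (R : realType) (v : R -> R) : W1inf v -> forall c, `|v c| <= supnorm v.
Proof.
move=> [M hM] c; apply: ub_le_sup; last by exists c.
by exists M => _ [x _ <-]; case: (hM x).
Qed.

Lemma normf_le_supnorm_drho (R : realType) (f : R -> R -> R -> R) :
  C2_halfspace f ->
  (exists M, forall t x r, 0 <= t -> `|pd_rho f t x r| <= M) ->
  (forall t x, 0 <= t -> f t x 0 = 0) ->
  forall t x r, 0 <= t -> `|f t x r| <= supnorm_drho f * `|r|.
Proof.
move=> [g [[[dg _] _] gf]] hM f0 t x r t0.
have fg : (fun s => f t x s) = g t x by apply/funext => s; rewrite gf.
have := @ler_dist_derive1 _ (fun s => f t x s) (supnorm_drho f) 0 r.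
rewrite f0 // !subr0; apply=> s; first by rewrite fg; exact: (dg t x s).2.2.
exact: le_supnorm_drho.
Qed.

Definition window (N : nat) : seq int := [seq i%:Z - N%:Z | i <- iota 0 (N + N).+1].

Lemma mem_window N j : (j \in window N) = (- N%:Z <= j <= N%:Z).
Proof.
apply/mapP/idP => [[i]|/andP[j_ge j_le]].
  by rewrite mem_iota add0n => /andP[_ i_lt] ->; apply/andP; split; lia.
exists (absz (j + N%:Z)); last by lia.
by rewrite mem_iota add0n; apply/andP; split; lia.
Qed.

Lemma window_uniq N : uniq (window N).
Proof. by rewrite map_inj_uniq ?iota_uniq // => a b /= ab; lia. Qed.

Lemma window_subset {N M} : (N <= M)%N -> {subset window N <= window M}.
Proof. by move=> NM j; rewrite !mem_window => /andP[? ?]; apply/andP; split; lia. Qed.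

Lemma window_exhaustive (js : seq int) : exists N, {subset js <= window N}.
Proof.
exists (\max_(j <- js) absz j) => j jjs; rewrite mem_window.
have := @leq_bigmax_seq _ js xpredT absz j jjs erefl.
by set m := \max_(_ <- _) _ => ?; apply/andP; split; lia.
Qed.

Lemma telescope_window (R : zmodType) (G : int -> R) M :
  \sum_(j <- window M) (G j - G (j - 1)) = G M%:Z - G (- M%:Z - 1).
Proof.
rewrite big_map.
rewrite (@telescope_sumr_eq _ 0 (M + M).+1 (fun k : nat => G (k%:Z - M%:Z - 1))) //.
  by congr (G _ - G _); lia.
by move=> k _ /=; congr (G _ - G _); lia.
Qed.

Lemma ler_sum_subset_uniq {R : numDomainType} {I : eqType} {a : I -> R} {s t : seq I} :
  (forall i, 0 <= a i) -> uniq s -> uniq t -> {subset s <= t} ->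
  \sum_(i <- s) a i <= \sum_(i <- t) a i.
Proof.
move=> a_ge0 us ut st.
rewrite (perm_big [seq i <- t | i \in s]); last first.
  apply: uniq_perm; rewrite ?filter_uniq // => i.
  by rewrite mem_filter andb_idr // => /st.
by rewrite big_filter big_mkcond ler_sum // => i _; case: ifP.
Qed.

Definition finsums_le {R : numDomainType} (a : int -> R) (s : R) :=
  forall js : seq int, uniq js -> \sum_(j <- js) a j <= s.

Section FinsumsLe.
Variables (R : numDomainType) (a : int -> R) (s : R).

Lemma finsums_le_ge0 : finsums_le a s -> 0 <= s.
Proof. by move/(_ [::] erefl); rewrite big_nil. Qed.

Lemma finsums_le_inj {g : nat -> int} N P : finsums_le a s -> injective g ->
  \sum_(i <- iota N P) a (g i) <= s.
Proof.
by move=> as_ g_inj; rewrite -(big_map g xpredT) as_ // map_inj_uniq ?iota_uniq.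
Qed.

Lemma finsums_le_window : (forall j, 0 <= a j) ->
  (forall N, \sum_(j <- window N) a j <= s) -> finsums_le a s.
Proof.
move=> a_ge0 as_ js ujs; have [N jsN] := window_exhaustive js.
apply: le_trans (as_ N); exact: ler_sum_subset_uniq (window_uniq N) jsN.
Qed.

End FinsumsLe.

Lemma le_of_natmul_le_plus_const (R : archiFieldType) (B s c : R) : 0 <= c ->
  (forall P : nat, P%:R * B <= P%:R * s + c) -> B <= s.
Proof.
move=> c_ge0 avg; rewrite leNgt; apply/negP => sB.
have Bs_gt0 : 0 < B - s by rewrite subr_gt0.
have := archi_boundP (divr_ge0 c_ge0 (ltW Bs_gt0)).
set P := Num.bound _; rewrite ltr_pdivrMr // mulrBr.
by have := avg P; lra.
Qed.

Section LaxFriedrichsStep.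
Variables (R : realType) (fl : int -> R -> R) (vv : int -> R) (lam : R).
Variable rho : int -> R.

Definition lf_flux (j : int) : R :=
  (fl j (rho j) + fl j (rho (j + 1))) / 2 * vv j - (6 * lam)^-1 * (rho (j + 1) - rho j).

Definition lf_step (j : int) : R := rho j - lam * (lf_flux j - lf_flux (j - 1)).

Variables (L V : R).
Hypotheses (L_ge0 : 0 <= L) (V_ge0 : 0 <= V) (lam_gt0 : 0 < lam).
Hypothesis cfl : lam * (1 + 2 * L) * V <= 6^-1.
Hypothesis fl_lip : forall j r, `|fl j r| <= L * `|r|.
Hypothesis vv_le : forall j, `|vv j| <= V.
Hypothesis rho_ge0 : forall j, 0 <= rho j.

Lemma lam_norm_transport_le j r : 0 <= r -> lam * `|fl j r * vv j| <= r / 12.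
Proof.
move=> r_ge0; have lamLV : lam * (L * V) <= 12^-1.
  have : 0 <= lam * V by rewrite mulr_ge0 // ltW.
  by move: cfl; rewrite !mulrDr !mulrDl; lra.
have flvv : `|fl j r * vv j| <= L * r * V.
  by rewrite normrM ler_pM // -{2}(ger0_norm r_ge0).
apply: le_trans (ler_wpM2l (ltW lam_gt0) flvv) _.
rewrite (_ : lam * _ = lam * (L * V) * r) 1?mulrC; last by ring.
exact: ler_wpM2l.
Qed.

Lemma lf_step_ge0 j : 0 <= lf_step j.
Proof.
set a := rho (j - 1); set b := rho j; set c := rho (j + 1).
have lf_stepE : lf_step j = (a + 4 * b + c) / 6
    - (lam * (fl j b * vv j) + lam * (fl j c * vv j)
       - lam * (fl (j - 1) a * vv (j - 1)) - lam * (fl (j - 1) b * vv (j - 1))) / 2.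
  rewrite /lf_step /lf_flux subrK -/a -/b -/c; field.
  by rewrite gt_eqF.
have bound x i : 0 <= x -> `|lam * (fl i x * vv i)| <= x / 12.
  by move=> x_ge0; rewrite normrM gtr0_norm // lam_norm_transport_le.
move: (bound _ j (rho_ge0 j)) (bound _ j (rho_ge0 (j + 1))).
move: (bound _ (j - 1) (rho_ge0 (j - 1))) (bound _ (j - 1) (rho_ge0 j)).
have := rho_ge0 (j - 1); have := rho_ge0 j; have := rho_ge0 (j + 1).
by rewrite lf_stepE -/a -/b -/c !ler_norml; lra.
Qed.

Let K := L * V + (6 * lam)^-1.

Lemma norm_lf_flux_le j : `|lf_flux j| <= K * (rho j + rho (j + 1)).
Proof.
have flvv r : 0 <= r -> `|fl j r * vv j| <= L * V * r.
  by move=> r_ge0; rewrite normrM mulrAC ler_pM // -{2}(ger0_norm r_ge0).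
have k_gt0 : 0 < (6 * lam)^-1 by rewrite invr_gt0 mulr_gt0.
move: (flvv _ (rho_ge0 j)) (flvv _ (rho_ge0 (j + 1))).
have := mulr_ge0 (mulr_ge0 L_ge0 V_ge0) (rho_ge0 j).
have := mulr_ge0 (mulr_ge0 L_ge0 V_ge0) (rho_ge0 (j + 1)).
have := mulr_ge0 (ltW k_gt0) (rho_ge0 j).
have := mulr_ge0 (ltW k_gt0) (rho_ge0 (j + 1)).
rewrite /lf_flux /K !ler_norml !mulrDl; lra.
Qed.

Definition window_boundary (M : nat) : R :=
  rho M%:Z + rho (M%:Z + 1) + rho (- M%:Z - 1) + rho (- M%:Z).

Lemma sum_window_lf_step_le M :
  \sum_(j <- window M) lf_step j <=
  \sum_(j <- window M) rho j + lam * K * window_boundary M.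
Proof.
rewrite /lf_step sumrB -mulr_sumr telescope_window lerD2l -mulrN opprB -mulrA.
rewrite ler_pM2l //.
have := norm_lf_flux_le M; have := norm_lf_flux_le (- M%:Z - 1).
rewrite subrK !ler_norml => /andP[_ flux_l] /andP[flux_r _].
have -> : K * window_boundary M =
    K * (rho (- M%:Z - 1) + rho (- M%:Z)) + K * (rho M%:Z + rho (M%:Z + 1)).
  by rewrite /window_boundary; ring.
lra.
Qed.

Lemma lf_step_finsums_le s : finsums_le rho s -> finsums_le lf_step s.
Proof.
move=> rho_s; apply: finsums_le_window => [|N]; first exact: lf_step_ge0.
have K_ge0 : 0 <= K.
  by rewrite addr_ge0 ?mulr_ge0 // invr_ge0 mulr_ge0 // ltW.
apply: (@le_of_natmul_le_plus_const _ _ _ (lam * K * (4 * s))).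
  by rewrite !mulr_ge0 ?(ltW lam_gt0) ?(finsums_le_ge0 rho_s).
move=> P; have sumE (x : R) : P%:R * x = \sum_(i <- iota N P) x.
  by rewrite big_const_seq count_predT size_iota mulr_natl iter_addr_0.
rewrite !sumE.
apply: (@le_trans _ _ (\sum_(i <- iota N P) (s + lam * K * window_boundary i))).
  rewrite big_seq [leRHS]big_seq ler_sum // => i; rewrite mem_iota => /andP[Ni _].
  apply: (le_trans (ler_sum_subset_uniq lf_step_ge0 (window_uniq N) (window_uniq i)
                      (window_subset Ni))).
  apply: (le_trans (sum_window_lf_step_le i)).
  by rewrite lerD2r rho_s // window_uniq.
rewrite big_split /= -mulr_sumr lerD2l; apply: ler_wpM2l.
  by rewrite mulr_ge0 // ltW.
have sum_le (g : nat -> int) : injective g -> \sum_(i <- iota N P) rho (g i) <= s.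
  by move=> g_inj; exact: finsums_le_inj.
rewrite /window_boundary !big_split /=.
have := sum_le (fun i => i%:Z) ltac:(move=> ? ? /=; lia).
have := sum_le (fun i => i%:Z + 1) ltac:(move=> ? ? /=; lia).
have := sum_le (fun i => - i%:Z - 1) ltac:(move=> ? ? /=; lia).
have := sum_le (fun i => - i%:Z) ltac:(move=> ? ? /=; lia).
lra.
Qed.

End LaxFriedrichsStep.

Lemma scheme_ge0_finsums_le (R : realType) (f : R -> R -> R -> R) (v eta rho0 : R -> R)
    (h tau : R) (theta : nat -> int -> R) (L V s : R) :
  0 <= L -> 0 <= V -> 0 < h -> 0 < tau -> (tau / h) * (1 + 2 * L) * V <= 6^-1 ->
  (forall t x r, 0 <= t -> `|f t x r| <= L * `|r|) -> (forall c, `|v c| <= V) ->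
  (forall j, 0 <= rho_init rho0 h j) -> finsums_le (rho_init rho0 h) s ->
  forall n, (forall j, 0 <= scheme f v eta rho0 h tau theta n j) /\
            finsums_le (scheme f v eta rho0 h tau theta n) s.
Proof.
move=> L_ge0 V_ge0 h_gt0 tau_gt0 cfl f_lip v_le init_ge0 init_s.
elim=> [//|n [rho_ge0 rho_s]] /=.
have tn_ge0 : 0 <= n%:R * tau by rewrite mulr_ge0 // ltW.
have lam_gt0 : 0 < tau / h by rewrite divr_gt0.
have fl_lip j r : `|f (n%:R * tau) (xhalf h j) r| <= L * `|r| := f_lip _ _ _ tn_ge0.
have vv_le j : `|v (conv_c eta h (theta n) (scheme f v eta rho0 h tau theta n) j)| <= V.
  exact: v_le.
split; first exact: lf_step_ge0 V_ge0 lam_gt0 cfl fl_lip vv_le rho_ge0.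
exact: lf_step_finsums_le L_ge0 V_ge0 lam_gt0 cfl fl_lip vv_le rho_ge0 _ rho_s.
Qed.

Lemma l1_disc_le (R : realType) (h S : R) (rho : int -> R) : 0 < h ->
  (forall j, 0 <= rho j) -> finsums_le rho (S / h) -> (l1_disc h rho <= S%:E)%E.
Proof.
move=> h_gt0 rho_ge0 rho_S; apply: ge_ereal_sup => _ [X [finX _] <-].
rewrite fsbig_finite // sumEFin lee_fin.
under eq_bigr do rewrite ger0_norm //.
rewrite -mulr_sumr mulrC -ler_pdivlMr //; exact/rho_S/finmap.fset_uniq.
Qed.

Lemma sum_at_most_one_le (R : realType) (P : pred int) (y : \bar R) (js : seq int) :
  (0 <= y)%E -> uniq js -> (forall j k, P j -> P k -> j = k) ->
  (\sum_(j <- js) (if P j then y else 0) <= y)%E.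
Proof.
move=> y_ge0; elim: js => [|j js IH] /=; first by rewrite big_nil.
move=> /andP[j_notin ujs] P1; rewrite big_cons.
case: (boolP (P j)) => [Pj|_]; last by rewrite add0e IH.
rewrite big1_seq ?adde0 // => k /andP[_ kjs]; case: (boolP (P k)) => // Pk.
by move: j_notin; rewrite (P1 _ _ Pj Pk) kjs.
Qed.

Lemma xhalf_cells_disjoint (R : realType) (h x : R) (j k : int) : 0 < h ->
  x \in `]xhalf h (j - 1), xhalf h j] -> x \in `]xhalf h (k - 1), xhalf h k] -> j = k.
Proof.
move=> h_gt0; rewrite !in_itv /= /xhalf => /andP[xj1 xj2] /andP[xk1 xk2].
have xhalf_le (m n : int) : (m < n)%R -> (m%:~R + 2^-1) * h <= ((n - 1)%:~R + 2^-1) * h.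
  by move=> mn; rewrite ler_pM2r // lerD2r ler_int; lia.
by case: (ltgtP j k) => // /xhalf_le ?; exfalso; lra.
Qed.

Lemma sum_rho_init_le (R : realType) (rho0 : R -> R) (h : R) (js : seq int) :
  0 < h -> measurable_fun setT rho0 -> uniq js ->
  ((\sum_(j <- js) h * rho_init rho0 h j)%:E <= L1_norm rho0)%E.
Proof.
move=> h_gt0 rho0_meas ujs.
set g := fun x : R => ((`|rho0 x|)%:E : \bar R).
set cell := fun j : int => `]xhalf h (j - 1), xhalf h j]%classic.
have g_ge0 x : (0 <= g x)%E by rewrite lee_fin.
have g_meas : measurable_fun [set: R] g.
  by apply/measurable_EFinP; apply: measurableT_comp => //; exact: normr_measurable.
have cell_meas j : measurable (cell j) by exact: measurable_itv.
have gcell_meas j : measurable_fun [set: R] (g \_ (cell j)).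
  by apply/(measurable_restrictT _ (cell_meas j)); exact: measurable_funS g_meas.
have cell_le j : ((h * rho_init rho0 h j)%:E <= \int[lebesgue_measure]_x (g \_ (cell j)) x)%E.
  rewrite /rho_init mulVKf ?gt_eqF // /Rintegral.
  apply: (@le_trans _ _ `|\int[lebesgue_measure]_(x in `[xhalf h (j - 1), xhalf h j]) (rho0 x)%:E|%E).
    by case: (\int[_]_(_ in _) _)%E => [r||] //=; rewrite ?lee_fin ?ler_norm ?leey.
  apply: le_trans (le_abse_integral _ _ _) _.
  - exact: measurable_itv.
  - by apply/measurable_EFinP; exact: measurable_funS rho0_meas.
  rewrite -integral_mkcond -integral_itv_obnd_cbnd //.
  exact: measurable_funS g_meas.
rewrite -sumEFin.
apply: le_trans; first by apply: lee_sum => j _; exact: cell_le.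
have gcell_ge0 j x : (0 <= (g \_ (cell j)) x)%E by apply: erestrict_ge0 => y _.
rewrite -ge0_integral_sum //; apply: ge0_le_integral => //.
- by move=> x _; apply: sume_ge0 => j _.
- by apply: emeasurable_sum => j; exact: gcell_meas.
move=> x _; rewrite /patch; apply: sum_at_most_one_le => // j k.
by rewrite /cell !in_setE /=; exact: xhalf_cells_disjoint.
Qed.

Theorem lemma2p4 (R : realType) (C : R) (f : R -> R -> R -> R)
  (v eta rho0 : R -> R) (h tau : R) (theta : nat -> int -> R) :
  0 < C ->
  C2_halfspace f ->
  (exists M, forall t x r, 0 <= t -> `|pd_rho f t x r| <= M) ->
  (forall t x r, 0 <= t -> `|pd_x f t x r| <= C * `|r|) ->
  (forall t x r, 0 <= t -> `|pd_x (pd_x f) t x r| <= C * `|r|) ->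
  (forall t x, 0 <= t -> f t x 0 = 0) ->
  C2_R1 v -> W1inf v ->
  C2_R1 eta -> W2inf eta ->
  Linf rho0 ->
  0 < h -> 0 < tau ->
  h < C^-1 ->
  (tau / h) * (1 + 2 * supnorm_drho f) * supnorm v <= 6^-1 ->
  (forall n k, 0 <= theta n k <= 1) ->
  (forall j, 0 <= rho_init rho0 h j) ->
  forall n : nat,
    (l1_disc h (scheme f v eta rho0 h tau theta n) <= L1_norm rho0)%E.
Proof.
(* Only the Lipschitz bound on [f] in [rho], [f(t, x, 0) = 0], the bound on [v]
   and the CFL condition matter: the convolution enters only through [v]. *)
move=> _ f_C2 drho_bd _ _ f0 _ v_W1 _ _ [rho0_meas _] h_gt0 tau_gt0 _ cfl _ init_ge0 n.
have f_lip := normf_le_supnorm_drho f_C2 drho_bd f0.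
have L_ge0 : 0 <= supnorm_drho f.
  exact: le_trans (normr_ge0 _) (le_supnorm_drho drho_bd 0 0 (lexx 0)).
have V_ge0 : 0 <= supnorm v by exact: le_trans (normr_ge0 _) (le_supnorm v_W1 0).
have : (0 <= L1_norm rho0)%E by apply: integral_ge0 => x _; rewrite lee_fin.
case E : (L1_norm rho0) => [S| |] // _; last by rewrite leey.
have init_S : finsums_le (rho_init rho0 h) (S / h).
  move=> js ujs; have := sum_rho_init_le h_gt0 rho0_meas ujs.
  by rewrite E lee_fin -mulr_sumr ler_pdivlMr // mulrC.
have [scheme_ge0 scheme_S] := scheme_ge0_finsums_le eta theta L_ge0 V_ge0 h_gt0 tau_gt0
  cfl f_lip (le_supnorm v_W1) init_ge0 init_S n.
exact: l1_disc_le h_gt0 scheme_ge0 scheme_S.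
Qed.
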